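(* Let $(R,\mathfrak m)$ be a Noetherian local ring, $X$ a finitely generated $R$-module, $N$ a Burch submodule of $X$, $t\ge1$ an integer, and $M$ a finitely generated $R$-module such that either (1) $\operatorname{Tor}_t^R(M,N)=\operatorname{Tor}_{t-1}^R(M,N)=0$, or (2) $\operatorname{Ext}^{t+1}_R(M,N)=\operatorname{Ext}^t_R(M,N)=0$. Then $\operatorname{pd}_R M<t$.
   Context: $\operatorname{Tor}_0^R(M,N)=M\otimes_RN$. For a submodule $N\subseteq X$, $(N:_X\mathfrak m)=\{x\in X:\mathfrak m x\subseteq N\}$. $N$ is a Burch submodule of $X$ if $\mathfrak m(N:_X\mathfrak m)\neq\mathfrak m N$. The projective dimension of the zero module is $-\infty$. *)

From HB Require Import structures.
From mathcomp Require Import all_boot all_order all_algebra.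
Set Implicit Arguments. Unset Strict Implicit. Unset Printing Implicit Defensive.
Import GRing.Theory.
Local Open Scope ring_scope.

Section CommAlg.
Variable R : comNzRingType.

Definition is_ideal (I : R -> Prop) : Prop :=
  I 0 /\ (forall x y, I x -> I y -> I (x + y)) /\ (forall r x, I x -> I (r * x)).

Definition proper_ideal (I : R -> Prop) : Prop := is_ideal I /\ ~ I 1.

Definition local_max_ideal (m : R -> Prop) : Prop :=
  proper_ideal m /\ forall I, proper_ideal I -> forall x, I x -> m x.

Definition noetherian : Prop :=
  forall I, is_ideal I -> exists n (g : 'I_n -> R), (forall i, I (g i)) /\
    forall x, I x -> exists c : 'I_n -> R, x = \sum_(i < n) c i * g i.

Variable M : lmodType R.

Definition fin_gen : Prop :=
  exists n (g : 'I_n -> M), forall x, exists c : 'I_n -> R,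
    x = \sum_(i < n) c i *: g i.

Definition submodule (N : M -> Prop) : Prop :=
  N 0 /\ (forall x y, N x -> N y -> N (x + y)) /\ (forall r x, N x -> N (r *: x)).

Definition colon (N : M -> Prop) (m : R -> Prop) : M -> Prop :=
  fun x => forall r, m r -> N (r *: x).

Definition ideal_mul (I : R -> Prop) (P : M -> Prop) : M -> Prop :=
  fun y => exists n (r : 'I_n -> R) (x : 'I_n -> M),
    (forall i, I (r i) /\ P (x i)) /\ y = \sum_(i < n) r i *: x i.

(* N is a Burch submodule of X (= M here): m (N :_X m) <> m N *)
Definition burch (m : R -> Prop) (N : M -> Prop) : Prop :=
  ~ (forall y, ideal_mul m (colon N m) y <-> ideal_mul m N y).

End CommAlg.

(* A free resolution  ... -> F_2 -d_1-> F_1 -d_0-> F_0 -eps-> M -> 0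
   with F_i = R^(b i) (row vectors), d_i : F_(i+1) -> F_i given by right
   multiplication with a b(i+1) x b(i) matrix, eps (x) = sum_j x_j g_j. *)
Record free_res (R : comNzRingType) (M : lmodType R) := FreeRes {
  fr_b : nat -> nat;
  fr_d : forall i, 'M[R]_(fr_b i.+1, fr_b i);
  fr_g : 'I_(fr_b 0) -> M }.
Arguments fr_b {R M} f i : rename.
Arguments fr_d {R M} f i : rename.
Arguments fr_g {R M} f _ : rename.

Unset Implicit Arguments.
Section Res.
Variables (R : comNzRingType) (M : lmodType R).
Implicit Type F : free_res M.

Definition fr_eps F (x : 'rV[R]_(fr_b F 0)) : M :=
  \sum_(j < fr_b F 0) x 0 j *: fr_g F j.

Definition is_free_res F : Prop :=
  (forall y : M, exists x, fr_eps F x = y) /\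
  (forall x, fr_eps F x = 0 <-> exists y, x = y *m fr_d F 0) /\
  (forall i (x : 'rV[R]_(fr_b F i.+1)),
      x *m fr_d F i = 0 <-> exists y, x = y *m fr_d F i.+1).

(* pd_R M < t  (with pd 0 = -oo): M has a free resolution by finitely
   generated free modules F_i with F_i = 0 for i >= t. *)
Definition pd_lt (t : nat) : Prop :=
  exists F : free_res M, is_free_res F /\ forall i, (t <= i)%N -> fr_b F i = 0%N.

Variable X : lmodType R.

(* the map d_i (x) N : F_(i+1) (x) N -> F_i (x) N, with F_k (x) N = N^(b k) *)
Definition tor_map {m n} (A : 'M[R]_(m, n)) (v : 'I_m -> X) : 'I_n -> X :=
  fun j => \sum_(k < m) A k j *: v k.

(* the map Hom(d_i, N) : Hom(F_i, N) -> Hom(F_(i+1), N), Hom(F_k,N) = N^(b k) *)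
Definition hom_map {m n} (A : 'M[R]_(m, n)) (w : 'I_n -> X) : 'I_m -> X :=
  fun k => \sum_(j < n) A k j *: w j.

Definition inN (N : X -> Prop) {n} (v : 'I_n -> X) : Prop := forall k, N (v k).

Definition tor_cycle F (i : nat) : ('I_(fr_b F i) -> X) -> Prop :=
  match i return ('I_(fr_b F i) -> X) -> Prop with
  | 0 => fun _ => True
  | i'.+1 => fun v => forall j, tor_map (fr_d F i') v j = 0
  end.

(* Tor_i^R(M, N) = H_i(F (x) N) = 0 *)
Definition tor_zero F (N : X -> Prop) (i : nat) : Prop :=
  forall v : 'I_(fr_b F i) -> X, inN N v -> tor_cycle F i v ->
    exists u : 'I_(fr_b F i.+1) -> X, inN N u /\
      forall j, v j = tor_map (fr_d F i) u j.

Definition ext_cobound F (N : X -> Prop) (i : nat) : ('I_(fr_b F i) -> X) -> Prop :=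
  match i return ('I_(fr_b F i) -> X) -> Prop with
  | 0 => fun w => forall j, w j = 0
  | i'.+1 => fun w => exists u : 'I_(fr_b F i') -> X, inN N u /\
                        forall j, w j = hom_map (fr_d F i') u j
  end.

(* Ext^i_R(M, N) = H^i(Hom(F, N)) = 0 *)
Definition ext_zero F (N : X -> Prop) (i : nat) : Prop :=
  forall w : 'I_(fr_b F i) -> X, inN N w ->
    (forall k, hom_map (fr_d F i) w k = 0) -> ext_cobound F N i w.

End Res.

Arguments fr_eps {R M} F x.
Arguments is_free_res {R M} F.
Arguments pd_lt {R} M t.
Arguments tor_map {R X m n} A v _.
Arguments hom_map {R X m n} A w _.
Arguments inN {R X} N {n} v.
Arguments tor_cycle {R M X} F i _.
Arguments tor_zero {R M X} F N i.
Arguments ext_cobound {R M X} F N i _.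
Arguments ext_zero {R M X} F N i.

(* If pd M >= t = s + 1, cancelling unit entries of the differentials next to
   F_(s+1) (the first step towards a minimal resolution) produces x in F_(s+1)
   and a linear form c on F_(s+1) with c(x) = 1, d_s(x) in m F_s and
   c(im d_(s+1)) in m.  As N is Burch there are a in m and z in (N :_X m) with
   a z not in m N.  Now d_s(x) z, which lies in N^(b_s) because d_s(x) has
   entries in m, is a cycle of F (x) N; the vanishing of Tor_s writes it as
   d_s(u), so a u - x a z is a cycle in degree s+1, hence a boundary
   d_(s+1)(u') by the vanishing of Tor_(s+1).  Applying c,
   a z = c(a u) - c(d_(s+1)(u')) lies in m N, a contradiction.  The Ext case
   is dual, with the roles of x and c exchanged. *)

From Pilot Require Import Defs.
From HB Require Import structures.
From mathcomp Require Import all_boot all_order all_algebra.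
From mathcomp Require Import zify ring.
From Stdlib Require Import Classical.
Set Implicit Arguments. Unset Strict Implicit. Unset Printing Implicit Defensive.
Import GRing.Theory.
Local Open Scope ring_scope.

Section FreeResolution.
Variables (R : comNzRingType) (M : lmodType R).

Lemma free_res_dd (F : free_res M) i (y : 'rV[R]_(fr_b F i.+2)) :
  is_free_res F -> y *m fr_d F i.+1 *m fr_d F i = 0.
Proof. by move=> [_ [_ Hex]]; apply/Hex; exists y. Qed.

Lemma free_res_ddmx (F : free_res M) i :
  is_free_res F -> fr_d F i.+1 *m fr_d F i = 0.
Proof.
move=> HF; apply/row_matrixP => r.
by rewrite row_mul row0 rowE free_res_dd.
Qed.

Lemma free_res_eps_d0 (F : free_res M) (y : 'rV[R]_(fr_b F 1%N)) :
  is_free_res F -> fr_eps F (y *m fr_d F 0%N) = 0.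
Proof. by move=> [_ [Hex _]]; apply/Hex; exists y. Qed.

Lemma free_res_retract (F F' : free_res M)
  (A : forall i, 'M[R]_(fr_b F' i, fr_b F i))
  (B : forall i, 'M[R]_(fr_b F i, fr_b F' i)) :
  is_free_res F ->
  (forall i, A i *m B i = 1%:M) ->
  (forall i, A i.+1 *m fr_d F i = fr_d F' i *m A i) ->
  (forall i, fr_d F i *m B i = B i.+1 *m fr_d F' i) ->
  (forall x, fr_eps F' x = fr_eps F (x *m A 0%N)) ->
  (forall x, fr_eps F x = fr_eps F' (x *m B 0%N)) ->
  is_free_res F'.
Proof.
move=> HF HAB HA HB HeA HeB; have [Hsurj [Hex0 Hex]] := HF.
have ABK i (x : 'rV_(fr_b F' i)) : x = x *m A i *m B i.
  by rewrite -mulmxA HAB mulmx1.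
split; [|split].
- by move=> y; have [x <-] := Hsurj y; exists (x *m B 0%N); rewrite HeB.
- move=> x; split.
  + rewrite HeA => /Hex0 [y Hy]; exists (y *m B 1%N).
    by rewrite (ABK 0%N x) Hy -mulmxA HB mulmxA.
  + move=> [y ->]; rewrite HeA -mulmxA -HA mulmxA; apply/Hex0.
    by exists (y *m A 1%N).
- move=> i x; split.
  + move=> Hx.
    have : x *m A i.+1 *m fr_d F i = 0 by rewrite -mulmxA HA mulmxA Hx mul0mx.
    move/Hex => [y Hy]; exists (y *m B i.+2).
    by rewrite (ABK _ x) Hy -mulmxA HB mulmxA.
  + move=> [y ->]; rewrite (ABK _ (y *m fr_d F' i.+1 *m fr_d F' i)).
    rewrite -(mulmxA (y *m _)) -HA mulmxA -(mulmxA y) -HA mulmxA.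
    by rewrite free_res_dd // !mul0mx.
Qed.

End FreeResolution.

Section Sums.

Lemma big_ord_inj (V : nmodType) m n (e : 'I_m -> 'I_n) (P : pred 'I_n)
    (f : 'I_n -> V) :
  injective e -> (forall k, P (e k)) -> (forall j, P j -> exists k, e k = j) ->
  \sum_(k < m) f (e k) = \sum_(j < n | P j) f j.
Proof.
move=> e_inj eP Pe.
rewrite -(big_map e predT f) -[in RHS]big_filter.
apply: perm_big; apply: uniq_perm.
- by rewrite map_inj_uniq ?index_enum_uniq.
- by rewrite filter_uniq ?index_enum_uniq.
move=> j; rewrite mem_filter mem_index_enum andbT.
apply/mapP/idP => [[k _ ->] // | /Pe [k <-]].
by exists k; rewrite ?mem_index_enum.
Qed.

Variable R : pzSemiRingType.

Lemma sumr_pick_cond n (P : pred 'I_n) (j : 'I_n) (g : 'I_n -> R) :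
  \sum_(j' < n | P j') g j' * (j' == j)%:R = (P j)%:R * g j.
Proof.
case Pj: (P j).
- rewrite (bigD1 j) //= eqxx mulr1 big1 ?addr0 ?mul1r // => j' /andP [_ /negbTE ->].
  by rewrite mulr0.
- rewrite big1 ?mul0r // => j' Pj'; case: eqP => [E|]; last by rewrite mulr0.
  by rewrite E Pj in Pj'.
Qed.

Lemma sumr_pickl_cond n (P : pred 'I_n) (j : 'I_n) (g : 'I_n -> R) :
  \sum_(j' < n | P j') (j == j')%:R * g j' = (P j)%:R * g j.
Proof.
rewrite -sumr_pick_cond; apply: eq_bigr => j' _.
by rewrite eq_sym mulr_natl mulr_natr.
Qed.

Lemma sumr_pickr n (j : 'I_n) (g : 'I_n -> R) :
  \sum_(j' < n) g j' * (j' == j)%:R = g j.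
Proof. by rewrite sumr_pick_cond mul1r. Qed.

Lemma sumr_pickl n (j : 'I_n) (g : 'I_n -> R) :
  \sum_(j' < n) (j == j')%:R * g j' = g j.
Proof. by rewrite sumr_pickl_cond mul1r. Qed.

Lemma sumZ_pick_cond (V : lSemiModType R) n (P : pred 'I_n) (j : 'I_n)
    (f : 'I_n -> V) :
  \sum_(j' < n | P j') (j == j')%:R *: f j' = (P j)%:R *: f j.
Proof.
case Pj: (P j).
- rewrite (bigD1 j) //= eqxx scale1r big1 ?addr0 // => j' /andP [_ /negbTE].
  by rewrite eq_sym => ->; rewrite scale0r.
- rewrite scale0r big1 // => j' Pj'; case: eqP => [E|]; last by rewrite scale0r.
  by rewrite -E Pj in Pj'.
Qed.

Lemma sumZ_pick (V : lSemiModType R) n (j : 'I_n) (f : 'I_n -> V) :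
  \sum_(j' < n) (j == j')%:R *: f j' = f j.
Proof. by rewrite sumZ_pick_cond scale1r. Qed.

End Sums.

Section Truncation.
Variables (R : comNzRingType) (M : lmodType R) (F : free_res M) (t : nat).
Hypothesis t_gt0 : (0 < t)%N.
Hypothesis bt0 : fr_b F t = 0%N.

Definition trunc_b i := if (i < t)%N then fr_b F i else 0%N.

Lemma trunc_b_le i : (trunc_b i <= fr_b F i)%N.
Proof. by rewrite /trunc_b; case: ifP. Qed.

Lemma trunc_b0 i : (t <= i)%N -> trunc_b i = 0%N.
Proof. by rewrite /trunc_b ltnNge => ->. Qed.

Lemma trunc_ord0 i (k : 'I_(trunc_b i)) : (t <= i)%N -> False.
Proof. by move=> ti; case: k => k; rewrite trunc_b0. Qed.

Definition trunc_emb i (k : 'I_(trunc_b i)) : 'I_(fr_b F i) :=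
  widen_ord (trunc_b_le i) k.

Lemma trunc_emb_inj i : injective (@trunc_emb i).
Proof. by move=> k k' /(congr1 val) /= E; apply: val_inj. Qed.

Lemma trunc_emb_sum (V : nmodType) i (f : 'I_(fr_b F i) -> V) : (i < t)%N ->
  \sum_(k < trunc_b i) f (trunc_emb k) = \sum_(j < fr_b F i) f j.
Proof.
move=> it; rewrite (@big_ord_inj _ _ _ _ predT) //; first exact: trunc_emb_inj.
move=> j _; have jt : (j < trunc_b i)%N by rewrite /trunc_b it.
by exists (Ordinal jt); apply: val_inj.
Qed.

Definition trunc_res : free_res M :=
  @FreeRes R M trunc_b
    (fun i => \matrix_(k, j) fr_d F i (trunc_emb k) (trunc_emb j))
    (fun k => fr_g F (trunc_emb k)).

Definition trunc_incl i : 'M[R]_(trunc_b i, fr_b F i) :=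
  \matrix_(k, j) (trunc_emb k == j)%:R.
Definition trunc_proj i : 'M[R]_(fr_b F i, trunc_b i) :=
  \matrix_(j, k) (j == trunc_emb k)%:R.

Lemma trunc_incl_proj i : trunc_incl i *m trunc_proj i = 1%:M.
Proof.
apply/matrixP => k k'; rewrite !mxE.
under eq_bigr do rewrite !mxE.
by rewrite sumr_pickl (inj_eq (@trunc_emb_inj i)).
Qed.

Lemma trunc_incl_d i :
  trunc_incl i.+1 *m fr_d F i = fr_d trunc_res i *m trunc_incl i.
Proof.
apply/matrixP => k j; rewrite !mxE.
under eq_bigr do rewrite !mxE.
under [RHS]eq_bigr do rewrite !mxE.
rewrite sumr_pickl.
case: (ltnP i t) => it.
  by rewrite (trunc_emb_sum (fun j' => fr_d F i _ j' * (j' == j)%:R)) ?sumr_pickr.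
by case: (trunc_ord0 k); rewrite (leq_trans it).
Qed.

Lemma trunc_d_proj i :
  fr_d F i *m trunc_proj i = trunc_proj i.+1 *m fr_d trunc_res i.
Proof.
apply/matrixP => l k; rewrite !mxE.
under eq_bigr do rewrite !mxE.
under [RHS]eq_bigr do rewrite !mxE.
rewrite sumr_pickr.
case: (ltnP i.+1 t) => it.
  by rewrite (trunc_emb_sum (fun j' => (l == j')%:R * fr_d F i j' _)) ?sumr_pickl.
case: (ltnP i t) => [it'|ti]; last by case: (trunc_ord0 k).
have ei : i.+1 = t by apply/eqP; rewrite eqn_leq it it'.
by exfalso; case: l => l; rewrite ei bt0.
Qed.

Lemma trunc_eps_incl x :
  fr_eps trunc_res x = fr_eps F (x *m trunc_incl 0%N).
Proof.
rewrite /fr_eps -(trunc_emb_sum (fun j => (x *m _) 0 j *: fr_g F j)) //.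
apply: eq_bigr => k _; rewrite !mxE; congr (_ *: _).
by under eq_bigr do rewrite !mxE; rewrite sumr_pickr.
Qed.

Lemma trunc_eps_proj x :
  fr_eps F x = fr_eps trunc_res (x *m trunc_proj 0%N).
Proof.
rewrite /fr_eps -(trunc_emb_sum (fun j => x 0 j *: fr_g F j)) //.
apply: eq_bigr => k _; rewrite !mxE; congr (_ *: _).
by under eq_bigr do rewrite !mxE; rewrite sumr_pickr.
Qed.

Lemma pd_lt_trunc : is_free_res F -> pd_lt M t.
Proof.
move=> HF; exists trunc_res; split; last exact: trunc_b0.
apply: (@free_res_retract _ _ F trunc_res trunc_incl trunc_proj HF).
- exact: trunc_incl_proj.
- exact: trunc_incl_d.
- exact: trunc_d_proj.
- exact: trunc_eps_incl.
- exact: trunc_eps_proj.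
Qed.

End Truncation.

(* Entries addressed by natural numbers (and [0] out of range), so that a
   fixed row or column index can be mentioned uniformly in every degree. *)
Definition nat_entry (R : comNzRingType) m n (A : 'M[R]_(m, n)) (r c : nat) : R :=
  \sum_(k < m) \sum_(j < n) ((val k == r) && (val j == c))%:R * A k j.

Section NatEntry.
Variable R : comNzRingType.

Lemma nat_entryl m n (A : 'M[R]_(m, n)) r (j : 'I_n) :
  nat_entry A r j = \sum_(k < m) (val k == r)%:R * A k j.
Proof.
apply: eq_bigr => k _.
rewrite (eq_bigr (fun j' => ((val k == r)%:R * A k j') * (j' == j)%:R)).
  by rewrite sumr_pickr.
by move=> j' _; rewrite (inj_eq val_inj) -mulnb natrM; ring.
Qed.

Lemma nat_entryr m n (A : 'M[R]_(m, n)) (k : 'I_m) c :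
  nat_entry A k c = \sum_(j < n) (val j == c)%:R * A k j.
Proof.
rewrite /nat_entry (eq_bigr (fun k' =>
  (k == k')%:R * \sum_(j < n) (val j == c)%:R * A k' j)); first by rewrite sumr_pickl.
move=> k' _; rewrite mulr_sumr; apply: eq_bigr => j _.
by rewrite (inj_eq val_inj) [k' == k]eq_sym -mulnb natrM; ring.
Qed.

Lemma nat_entryE m n (A : 'M[R]_(m, n)) (k : 'I_m) (j : 'I_n) :
  nat_entry A k j = A k j.
Proof.
rewrite nat_entryr (eq_bigr (fun j' => A k j' * (j' == j)%:R)) ?sumr_pickr //.
by move=> j' _; rewrite (inj_eq val_inj) mulrC.
Qed.

End NatEntry.

Section NatEntryRes.
Variables (R : comNzRingType) (M : lmodType R) (F : free_res M).
Hypothesis HF : is_free_res F.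
Local Notation b := (fr_b F).
Local Notation D := (fr_d F).

Lemma dd_nat_entryr i (r : 'I_(b i.+2)) c :
  \sum_(j < b i.+1) D i.+1 r j * nat_entry (D i) j c = 0.
Proof.
under eq_bigr do rewrite nat_entryr mulr_sumr.
rewrite exchange_big big1 // => c' _.
rewrite (eq_bigr (fun j => (val c' == c)%:R * (D i.+1 r j * D i j c'))).
  rewrite -mulr_sumr.
  by move/matrixP: (free_res_ddmx i HF) => /(_ r c'); rewrite !mxE => ->; rewrite mulr0.
by move=> j _; ring.
Qed.

Lemma dd_nat_entryl i r (c : 'I_(b i)) :
  \sum_(j < b i.+1) nat_entry (D i.+1) r j * D i j c = 0.
Proof.
under eq_bigr do rewrite nat_entryl mulr_suml.
rewrite exchange_big big1 // => k _.
rewrite (eq_bigr (fun j => (val k == r)%:R * (D i.+1 k j * D i j c))).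
  rewrite -mulr_sumr.
  by move/matrixP: (free_res_ddmx i HF) => /(_ k c); rewrite !mxE => ->; rewrite mulr0.
by move=> j _; ring.
Qed.

Lemma eps_nat_entry r : \sum_(j < b 0%N) nat_entry (D 0%N) r j *: fr_g F j = 0.
Proof.
under eq_bigr do rewrite nat_entryl scaler_suml.
rewrite exchange_big big1 // => k _.
rewrite (eq_bigr (fun j => (val k == r)%:R *: (D 0%N k j *: fr_g F j))).
  rewrite -scaler_sumr (_ : \sum_j _ = fr_eps F (delta_mx 0 k *m D 0%N)).
    by rewrite free_res_eps_d0 // scaler0.
  by rewrite /fr_eps -rowE; apply: eq_bigr => j _; rewrite mxE.
by move=> j _; rewrite scalerA.
Qed.

End NatEntryRes.

Section Cancellation.
Variables (R : comNzRingType) (M : lmodType R) (F : free_res M).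
Variables (i0 p q : nat) (v : R).
Local Notation b := (fr_b F).
Local Notation D := (fr_d F).
Hypothesis hp : (p < b i0.+1)%N.
Hypothesis hq : (q < b i0)%N.

Definition cut i := (i == i0) || (i == i0.+1).
Definition cut_idx i := if i == i0 then q else p.
Definition cut_b i := (b i - cut i)%N.

Lemma cut_idx_lt i : cut i -> (cut_idx i < b i)%N.
Proof. by rewrite /cut /cut_idx; case: (eqVneq i i0) => [->|_] //= /eqP ->. Qed.

Lemma cut_emb_lt i (k : 'I_(cut_b i)) :
  ((if cut i then bump (cut_idx i) k else k) < b i)%N.
Proof.
have := ltn_ord k; move: (nat_of_ord k) => kn; rewrite /cut_b.
case Hc: (cut i) => /=; last lia.
by have := cut_idx_lt Hc; rewrite /bump; case: (cut_idx i <= kn)%N => /=; lia.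
Qed.

Definition cut_emb i (k : 'I_(cut_b i)) : 'I_(b i) := Ordinal (cut_emb_lt k).
Definition kept i : pred 'I_(b i) := fun j => ~~ (cut i && (val j == cut_idx i)).
Arguments kept : clear implicits.

Lemma kept_i0 i (j : 'I_(b i)) : i = i0 -> kept i j = (val j != q).
Proof. by move/eqP => Ei; rewrite /kept /cut /cut_idx Ei. Qed.

Lemma kept_i1 i (j : 'I_(b i)) : i = i0.+1 -> kept i j = (val j != p).
Proof.
move=> Ei; rewrite /kept /cut /cut_idx (introT eqP Ei) orbT.
by have -> : (i == i0) = false by rewrite Ei (gtn_eqF (ltnSn i0)).
Qed.

Lemma kept_other i (j : 'I_(b i)) : i != i0 -> i != i0.+1 -> kept i j.
Proof. by rewrite /kept /cut => /negbTE -> /negbTE ->. Qed.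

Lemma cut_emb_inj i : injective (@cut_emb i).
Proof.
move=> k k' /(congr1 val) /=; case: (cut i) => E; apply: val_inj => //.
exact: (can_inj (bumpK (cut_idx i))).
Qed.

Lemma cut_emb_kept i k : kept i (@cut_emb i k).
Proof. by rewrite /kept /=; case: (cut i) => //=; rewrite eq_sym neq_bump. Qed.

Lemma cut_emb_onto i j : kept i j -> exists k, @cut_emb i k = j.
Proof.
rewrite /kept; case Hc: (cut i) => /= Hj; last first.
  have jb : (j < cut_b i)%N by rewrite /cut_b Hc subn0.
  by exists (Ordinal jb); apply: val_inj; rewrite /= Hc.
have jb : (unbump (cut_idx i) j < cut_b i)%N.
  have := ltn_ord j; have := cut_idx_lt Hc; move: Hj; rewrite /cut_b Hc /unbump /=.
  move: (nat_of_ord j) (cut_idx i) => jn sn /eqP.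
  by case: (ltnP sn jn) => /=; lia.
exists (Ordinal jb); apply: val_inj; rewrite /= Hc unbumpKcond.
by move/negbTE: Hj => ->.
Qed.

Lemma cut_emb_sum (V : nmodType) i (f : 'I_(b i) -> V) :
  \sum_(k < cut_b i) f (cut_emb k) = \sum_(j < b i | kept i j) f j.
Proof.
by apply: big_ord_inj; [exact: cut_emb_inj | exact: cut_emb_kept | exact: cut_emb_onto].
Qed.

Lemma cut_b_cut i : cut i -> cut_b i = (b i).-1.
Proof. by rewrite /cut_b => ->; rewrite subn1. Qed.

(* In degree [i0] the differential is replaced by the Schur complement of the
   entry [D i0 p q], whose row [p] and column [q] vanish. *)
Definition cut_schur i : 'M[R]_(b i.+1, b i) := \matrix_(k, j)
  (D i k j - (i == i0)%:R * (nat_entry (D i) k q * v * nat_entry (D i) p j)).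

Definition cut_d i : 'M[R]_(cut_b i.+1, cut_b i) :=
  \matrix_(k, j) cut_schur i (cut_emb k) (cut_emb j).

Definition cut_res : free_res M :=
  @FreeRes R M cut_b cut_d (fun k => fr_g F (cut_emb k)).

(* Inclusion of [cut_res] into [F] and projection back, splitting off the
   contractible summand [R e_p -> R e_q]; only the inclusion in degree
   [i0.+1] and the projection in degree [i0] need correction terms. *)
Definition cut_incl_entry i (j' j : 'I_(b i)) : R :=
  (j' == j)%:R - ((i == i0.+1) && (val j == p))%:R * (nat_entry (D i.-1) j' q * v).

Definition cut_proj_entry i (j j' : 'I_(b i)) : R :=
  (j == j')%:R - ((i == i0) && (val j == q))%:R * (v * nat_entry (D i) p j').

Definition cut_incl i : 'M[R]_(cut_b i, b i) :=
  \matrix_(k, j) cut_incl_entry (cut_emb k) j.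

Definition cut_proj i : 'M[R]_(b i, cut_b i) :=
  \matrix_(j, k) cut_proj_entry j (cut_emb k).

Lemma cut_schurE i r j : i != i0 -> cut_schur i r j = D i r j.
Proof. by rewrite mxE => /negbTE ->; rewrite mul0r subr0. Qed.

Lemma cut_incl_proj i : cut_incl i *m cut_proj i = 1%:M.
Proof.
apply/matrixP => k k'; rewrite !mxE.
under eq_bigr do rewrite !mxE /cut_incl_entry /cut_proj_entry mulrBl.
rewrite sumrB sumr_pickl (inj_eq (@cut_emb_inj i)).
case: (eqVneq i i0.+1) => [Ei|Ni] /=.
- subst i; rewrite (gtn_eqF (ltnSn i0)) /= mul0r subr0 big1 ?subr0 // => j _.
  case: (eqVneq j (cut_emb k')) => [->|_]; last by rewrite subr0 mulr0.
  by have := cut_emb_kept k'; rewrite kept_i1 // => /negbTE ->; rewrite !mul0r.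
- rewrite big1 ?subr0; last by move=> j _; rewrite !mul0r.
  case: (eqVneq i i0) => [Ei|_] /=; last by rewrite mul0r subr0.
  by have := cut_emb_kept k; rewrite kept_i0 // => /negbTE ->; rewrite mul0r subr0.
Qed.


Hypothesis hv : v * nat_entry (D i0) p q = 1.
Hypothesis HF : is_free_res F.

Lemma cut_schur_col r (j : 'I_(b i0)) : val j = q -> cut_schur i0 r j = 0.
Proof.
move=> Hj; have hv' := hv; rewrite mxE eqxx mul1r -Hj in hv' *.
by rewrite nat_entryE -mulrA hv' mulr1 subrr.
Qed.

Lemma cut_schur_row (r : 'I_(b i0.+1)) j : val r = p -> cut_schur i0 r j = 0.
Proof.
move=> Hr; have hv' := hv; rewrite mxE eqxx mul1r -Hr in hv' *.
by rewrite [_ * v]mulrC hv' mul1r nat_entryE subrr.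
Qed.

Lemma cut_incl_d_row i (r : 'I_(b i.+1)) j :
  \sum_(l < b i.+1) cut_incl_entry r l * D i l j = cut_schur i r j.
Proof.
rewrite mxE; under eq_bigr do rewrite /cut_incl_entry mulrBl.
rewrite sumrB sumr_pickl eqSS /= nat_entryl; congr (_ - _).
rewrite !mulr_sumr; apply: eq_bigr => l _; rewrite -mulnb natrM; ring.
Qed.

Lemma cut_d_proj_row i (l : 'I_(b i.+1)) j' :
  \sum_(j < b i) D i l j * cut_proj_entry j j' = cut_schur i l j'.
Proof.
rewrite mxE; under eq_bigr do rewrite /cut_proj_entry mulrBr.
rewrite [LHS]sumrB sumr_pickr nat_entryr; congr (_ - _).
rewrite -!mulrA; move: (v * _) => w.
rewrite mulr_suml mulr_sumr; apply: eq_bigr => j _.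
by rewrite -mulnb natrM; ring.
Qed.

Lemma cut_schur_incl i r j :
  \sum_(j' < b i | kept i j') cut_schur i r j' * cut_incl_entry j' j = cut_schur i r j.
Proof.
rewrite /cut_incl_entry; case: (eqVneq i i0.+1) => [Ei|Ni1] /=; last first.
  under eq_bigr do rewrite mul0r subr0.
  rewrite sumr_pick_cond; case: (eqVneq i i0) => [Ei|Ni0]; last first.
    by rewrite kept_other ?mul1r.
  subst i; rewrite kept_i0 //.
  case: (eqVneq (val j) q) => [Hj|_]; last by rewrite mul1r.
  by rewrite mul0r cut_schur_col.
subst i => /=.
under eq_bigr do rewrite cut_schurE ?(gtn_eqF (ltnSn i0)) //.
rewrite cut_schurE ?(gtn_eqF (ltnSn i0)) //.
case: (eqVneq (val j) p) => [Hj|Hj]; last first.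
  under eq_bigr do rewrite mul0r subr0.
  by rewrite sumr_pick_cond kept_i1 // Hj mul1r.
under eq_bigr do rewrite mul1r mulrBr.
rewrite sumrB sumr_pick_cond kept_i1 // Hj eqxx mul0r sub0r.
rewrite (eq_bigl (fun j' => j' != j)) => [|j']; last by rewrite kept_i1 // -Hj.
have := dd_nat_entryr HF r q; rewrite (bigD1 j) //= => /eqP.
rewrite addrC addr_eq0 => /eqP Hs.
rewrite (eq_bigr (fun j' => D i0.+1 r j' * nat_entry (D i0) j' q * v)).
  by rewrite -mulr_suml Hs mulNr opprK -mulrA Hj [_ * v]mulrC hv mulr1.
by move=> j' _; rewrite mulrA.
Qed.


Lemma cut_proj_schur i l c :
  \sum_(j' < b i.+1 | kept i.+1 j') cut_proj_entry l j' * cut_schur i j' c =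
  cut_schur i l c.
Proof.
rewrite /cut_proj_entry; case: (eqVneq i i0) => [Ei|Ni0].
  subst i; rewrite (gtn_eqF (ltnSn i0)) /=.
  under eq_bigr do rewrite mul0r subr0.
  rewrite sumr_pickl_cond kept_i1 //.
  by case: (eqVneq (val l) p) => [Hl|_]; rewrite ?mul1r // mul0r cut_schur_row.
rewrite cut_schurE //; under eq_bigr do rewrite cut_schurE //.
case: (eqVneq i.+1 i0) => [Ei|Ni1] /=; last first.
  under eq_bigr do rewrite mul0r subr0.
  by rewrite sumr_pickl_cond kept_other // ?mul1r // eqSS.
case: (eqVneq (val l) q) => [Hl|Hl] /=; last first.
  under eq_bigr do rewrite mul0r subr0.
  by rewrite sumr_pickl_cond kept_i0 // Hl mul1r.
under eq_bigr do rewrite mul1r mulrBl.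
rewrite sumrB sumr_pickl_cond kept_i0 // Hl eqxx mul0r sub0r.
rewrite (eq_bigl (fun j' => j' != l)) => [|j']; last by rewrite kept_i0 // -Hl.
have := dd_nat_entryl HF p c; rewrite (bigD1 l) //= => /eqP.
rewrite addrC addr_eq0 => /eqP Hs.
have hv' : v * nat_entry (D i.+1) p l = 1 by rewrite Hl Ei.
rewrite (eq_bigr (fun j' : 'I_(b i.+1) => v * (nat_entry (D i.+1) p j' * D i j' c))).
  by rewrite -mulr_sumr Hs mulrN opprK mulrA hv' mul1r.
by move=> j' _; rewrite mulrA.
Qed.

Lemma cut_incl_d i : cut_incl i.+1 *m D i = cut_d i *m cut_incl i.
Proof.
apply/matrixP => k j; rewrite !mxE.
under eq_bigr do rewrite mxE.
rewrite cut_incl_d_row -cut_schur_incl -cut_emb_sum.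
by apply: eq_bigr => l _; rewrite !mxE.
Qed.

Lemma cut_d_proj i : D i *m cut_proj i = cut_proj i.+1 *m cut_d i.
Proof.
apply/matrixP => l k; rewrite !mxE.
under eq_bigr do rewrite mxE.
rewrite cut_d_proj_row -cut_proj_schur -cut_emb_sum.
by apply: eq_bigr => k' _; rewrite !mxE.
Qed.

Lemma cut_proj_eps j :
  \sum_(j' < b 0%N | kept 0%N j') cut_proj_entry j j' *: fr_g F j' = fr_g F j.
Proof.
rewrite /cut_proj_entry; case: (eqVneq 0%N i0) => [E0|N0] /=; last first.
  under eq_bigr do rewrite mul0r subr0.
  by rewrite sumZ_pick_cond kept_other // scale1r.
case: (eqVneq (val j) q) => [Hj|Hj] /=; last first.
  under eq_bigr do rewrite mul0r subr0.
  by rewrite sumZ_pick_cond kept_i0 // Hj scale1r.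
under eq_bigr do rewrite mul1r scalerBl.
rewrite sumrB sumZ_pick_cond kept_i0 // Hj eqxx scale0r sub0r.
rewrite (eq_bigl (fun j' => j' != j)) => [|j']; last by rewrite kept_i0 // -Hj.
have := eps_nat_entry HF p; rewrite (bigD1 j) //= => /eqP.
rewrite addrC addr_eq0 => /eqP Hs.
have hv' : v * nat_entry (D 0%N) p j = 1 by rewrite Hj E0.
rewrite (eq_bigr (fun j' : 'I_(b 0%N) => v *: (nat_entry (D 0%N) p j' *: fr_g F j'))).
  by rewrite -scaler_sumr Hs scalerN opprK scalerA hv' scale1r.
by move=> j' _; rewrite scalerA.
Qed.

Lemma cut_eps_incl x : fr_eps cut_res x = fr_eps F (x *m cut_incl 0%N).
Proof.
rewrite /fr_eps; under [RHS]eq_bigr do rewrite !mxE scaler_suml.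
rewrite exchange_big; apply: eq_bigr => k _.
under eq_bigr do rewrite !mxE /cut_incl_entry /= mul0r subr0 -scalerA.
by rewrite -scaler_sumr sumZ_pick.
Qed.

Lemma cut_eps_proj x : fr_eps F x = fr_eps cut_res (x *m cut_proj 0%N).
Proof.
rewrite /fr_eps; under [RHS]eq_bigr do rewrite !mxE scaler_suml.
rewrite exchange_big /=; apply: eq_bigr => j _.
under eq_bigr do rewrite !mxE -scalerA.
rewrite -scaler_sumr (cut_emb_sum (fun j' => cut_proj_entry j j' *: fr_g F j')).
by rewrite cut_proj_eps.
Qed.

Lemma cut_is_free_res : is_free_res cut_res.
Proof.
apply: (@free_res_retract _ _ F cut_res cut_incl cut_proj HF).
- exact: cut_incl_proj.
- exact: cut_incl_d.
- exact: cut_d_proj.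
- exact: cut_eps_incl.
- exact: cut_eps_proj.
Qed.

End Cancellation.

Section MaximalIdeal.
Variables (R : comNzRingType) (m : R -> Prop).
Hypothesis Hloc : local_max_ideal m.

Lemma max_ideal_is_ideal : Defs.is_ideal m.
Proof. by case: Hloc => [[]]. Qed.

Lemma max_ideal_sum n (f : 'I_n -> R) : (forall i, m (f i)) -> m (\sum_(i < n) f i).
Proof.
have [m0 [mD _]] := max_ideal_is_ideal.
by move=> mf; apply: big_ind.
Qed.

Lemma max_ideal_mull x y : m y -> m (x * y).
Proof. by have [_ [_ mM]] := max_ideal_is_ideal; apply: mM. Qed.

Lemma max_ideal_mulr x y : m x -> m (x * y).
Proof. by rewrite mulrC; apply: max_ideal_mull. Qed.

Lemma max_ideal_row_mul n k (x : 'rV[R]_n) (Y : 'M[R]_(n, k)) :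
  (forall j, m (x 0 j)) -> forall j, m ((x *m Y) 0 j).
Proof.
by move=> mx j; rewrite mxE; apply: max_ideal_sum => i; apply: max_ideal_mulr.
Qed.

Lemma max_ideal_col_mul n k (Y : 'M[R]_(k, n)) (c : 'cV[R]_n) :
  (forall i, m (c i 0)) -> forall i, m ((Y *m c) i 0).
Proof.
by move=> mc j; rewrite mxE; apply: max_ideal_sum => i; apply: max_ideal_mull.
Qed.

Lemma not_max_ideal_unit x : ~ m x -> exists v, v * x = 1.
Proof.
move=> mx; apply: NNPP => Nu; apply: mx.
pose I y := exists r, y = r * x.
have HI : Defs.proper_ideal I.
  split; [split; [|split]|].
  - by exists 0; rewrite mul0r.
  - by move=> a b [r ->] [r' ->]; exists (r + r'); rewrite mulrDl.
  - by move=> r a [r' ->]; exists (r * r'); rewrite mulrA.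
  - by move=> [r Hr]; apply: Nu; exists r.
by apply: (Hloc.2 I HI); exists 1; rewrite mul1r.
Qed.

End MaximalIdeal.

Section MinimalPair.
Variables (R : comNzRingType) (M : lmodType R) (m : R -> Prop).
Hypothesis Hloc : local_max_ideal m.

(* A basis vector of [F_(s+1)] in a minimal resolution, with its coordinate
   form, is such a pair; only this much minimality is needed. *)
Definition min_pair (F : free_res M) s : Prop :=
  exists (x : 'rV[R]_(fr_b F s.+1)) (c : 'cV[R]_(fr_b F s.+1)),
    [/\ forall j, m ((x *m fr_d F s) 0 j), forall k, m ((fr_d F s.+1 *m c) k 0)
      & (x *m c) 0 0 = 1].

Lemma min_pair_retract (F F' : free_res M) s
  (A : 'M[R]_(fr_b F' s.+1, fr_b F s.+1)) (B : 'M[R]_(fr_b F s.+1, fr_b F' s.+1))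
  (A0 : 'M[R]_(fr_b F' s, fr_b F s)) (B2 : 'M[R]_(fr_b F s.+2, fr_b F' s.+2)) :
  A *m B = 1%:M -> A *m fr_d F s = fr_d F' s *m A0 ->
  fr_d F s.+1 *m B = B2 *m fr_d F' s.+1 -> min_pair F' s -> min_pair F s.
Proof.
move=> HAB HA HB [x [c [Hx Hc H1]]].
exists (x *m A), (B *m c); split.
- by rewrite -mulmxA HA mulmxA; apply: max_ideal_row_mul.
- by rewrite mulmxA HB -mulmxA; apply: max_ideal_col_mul.
- by rewrite mulmxA -(mulmxA x) HAB mulmx1.
Qed.

Lemma min_pair_cut (F : free_res M) s i0 (k : 'I_(fr_b F i0.+1))
    (j : 'I_(fr_b F i0)) v :
  is_free_res F -> v * fr_d F i0 k j = 1 ->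
  min_pair (cut_res v (ltn_ord k) (ltn_ord j)) s -> min_pair F s.
Proof.
move=> HF; rewrite -nat_entryE => hv.
apply: min_pair_retract.
- exact: (cut_incl_proj _ _ _ s.+1).
- exact: (cut_incl_d _ _ hv HF s).
- exact: (cut_d_proj _ _ hv HF s.+1).
Qed.

Lemma min_pair_delta (F : free_res M) s (k0 : 'I_(fr_b F s.+1)) :
  (forall j, m (fr_d F s k0 j)) -> (forall k, m (fr_d F s.+1 k k0)) ->
  min_pair F s.
Proof.
move=> Hrow Hcol; exists (delta_mx 0 k0), (delta_mx k0 0); split.
- by move=> j; rewrite -rowE mxE.
- by move=> k; rewrite -colE mxE.
- by rewrite mul_delta_mx mxE !eqxx.
Qed.

Lemma min_pair_or_pd_lt s n (F : free_res M) :
  is_free_res F -> fr_b F s.+1 = n -> min_pair F s \/ pd_lt M s.+1.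
Proof.
elim: n F => [|n IH] F HF Hn; first by right; apply: (pd_lt_trunc (ltn0Sn s) Hn).
have cancel_unit i0 (k : 'I_(fr_b F i0.+1)) (j : 'I_(fr_b F i0)) :
    cut i0 s.+1 -> ~ m (fr_d F i0 k j) -> min_pair F s \/ pd_lt M s.+1.
  move=> Hcut /(not_max_ideal_unit Hloc) [v hv].
  have hv' : v * nat_entry (fr_d F i0) k j = 1 by rewrite nat_entryE.
  have Hn' : fr_b (cut_res v (ltn_ord k) (ltn_ord j)) s.+1 = n.
    by rewrite /= cut_b_cut // Hn.
  case: (IH _ (cut_is_free_res _ _ hv' HF) Hn') => [Hp|]; last by right.
  by left; apply: (min_pair_cut HF hv Hp).
case: (classic (exists k j, ~ m (fr_d F s k j))) => [[k [j]]|Hs].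
  by apply: (cancel_unit s k j); rewrite /cut eqxx orbT.
case: (classic (exists k j, ~ m (fr_d F s.+1 k j))) => [[k [j]]|Hs1].
  by apply: (cancel_unit s.+1 k j); rewrite /cut eqxx.
have k0 : 'I_(fr_b F s.+1) by rewrite Hn; exact: ord0.
left; apply: (min_pair_delta (k0 := k0)) => [j|k]; apply: NNPP => Hm.
- by apply: Hs; exists k0, j.
- by apply: Hs1; exists k, k0.
Qed.

End MinimalPair.

Section BurchWitness.
Variables (R : comNzRingType) (m : R -> Prop) (X : lmodType R) (N : X -> Prop).
Hypothesis Hloc : local_max_ideal m.
Hypothesis HN : submodule N.
Local Notation mN := (ideal_mul m N).

Lemma submoduleZ r y : N y -> N (r *: y).
Proof. by case: HN => [_ [_ NZ]]; apply: NZ. Qed.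

Lemma submoduleD y y' : N y -> N y' -> N (y + y').
Proof. by case: HN => [_ [ND _]]; apply: ND. Qed.

Lemma submoduleB y y' : N y -> N y' -> N (y - y').
Proof.
by move=> Ny Ny'; apply: submoduleD => //; rewrite -scaleN1r; apply: submoduleZ.
Qed.

Lemma ideal_mul_sum_mem n (r : 'I_n -> R) (x : 'I_n -> X) :
  (forall i, m (r i)) -> (forall i, N (x i)) -> mN (\sum_(i < n) r i *: x i).
Proof. by move=> mr Nx; exists n, r, x. Qed.

Lemma ideal_mul0 : mN 0.
Proof. by exists 0%N, (fun _ => 0), (fun _ => 0); split; [case | rewrite big_ord0]. Qed.

Lemma ideal_mulN y : mN y -> mN (- y).
Proof.
move=> [n [r [x [H ->]]]]; exists n, (fun i => - r i), x; split.
  move=> i; split; last exact: (H i).2.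
  by rewrite -mulN1r; apply: max_ideal_mull; case: (H i).
by rewrite -sumrN; apply: eq_bigr => i _; rewrite scaleNr.
Qed.

Lemma ideal_mulD y y' : mN y -> mN y' -> mN (y + y').
Proof.
move=> [n [r [x [H ->]]]] [n' [r' [x' [H' ->]]]].
exists (n + n')%N, (fun i => match split i with inl i1 => r i1 | inr i2 => r' i2 end).
exists (fun i => match split i with inl i1 => x i1 | inr i2 => x' i2 end).
split; first by move=> i; case: (split i).
have splitl (i : 'I_n) : split (lshift n' i) = inl i := unsplitK (inl i).
have splitr (i : 'I_n') : split (rshift n i) = inr i := unsplitK (inr i).
rewrite big_split_ord /=; congr (_ + _); apply: eq_bigr => i _.
- by rewrite splitl.
- by rewrite splitr.
Qed.

Lemma ideal_mulB y y' : mN y -> mN y' -> mN (y - y').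
Proof. by move=> my my'; apply: ideal_mulD => //; apply: ideal_mulN. Qed.

Lemma ideal_mul_sum n (f : 'I_n -> X) :
  (forall i, mN (f i)) -> mN (\sum_(i < n) f i).
Proof. by move=> mf; apply: big_ind => //; [exact: ideal_mul0 | exact: ideal_mulD]. Qed.

Lemma burch_witness : burch m N -> exists a z, [/\ m a, colon N m z & ~ mN (a *: z)].
Proof.
move=> Hb; apply: NNPP => Nw; apply: Hb => y; split.
  move=> [n [r [x [H ->]]]]; apply: ideal_mul_sum => i.
  apply: NNPP => Ni; apply: Nw; exists (r i), (x i).
  by case: (H i).
move=> [n [r [x [H ->]]]]; exists n, r, x; split => // i; split; first exact: (H i).1.
by move=> r' _; apply: submoduleZ; exact: (H i).2.
Qed.

Lemma colon_scale a z r : m a -> colon N m z -> N ((r * a) *: z).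
Proof. by move=> ma Hz; apply: Hz; apply: max_ideal_mull. Qed.

Lemma submodule_shift a z r y :
  m a -> colon N m z -> N y -> N (a *: y - (r * a) *: z).
Proof.
move=> ma Hz Ny; apply: submoduleB; first exact: submoduleZ.
exact: colon_scale.
Qed.

End BurchWitness.

Section ComplexMaps.
Variables (R : comNzRingType) (X : lmodType R).

Lemma tor_map_scale_row m n k (A : 'M[R]_(m, n)) (B : 'M[R]_(k, m))
    (y : 'rV[R]_k) (z : X) j :
  tor_map A (fun l => (y *m B) 0 l *: z) j = (y *m B *m A) 0 j *: z.
Proof.
rewrite /tor_map [in RHS]mxE scaler_suml.
by apply: eq_bigr => l _; rewrite scalerA mulrC.
Qed.

Lemma hom_map_scale_col m n k (A : 'M[R]_(m, n)) (B : 'M[R]_(n, k))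
    (c : 'cV[R]_k) (z : X) l :
  hom_map A (fun j => (B *m c) j 0 *: z) l = (A *m (B *m c)) l 0 *: z.
Proof.
rewrite /hom_map [in RHS]mxE scaler_suml.
by apply: eq_bigr => j _; rewrite scalerA.
Qed.

Lemma tor_map_shift m n (A : 'M[R]_(m, n)) (u : 'I_m -> X) (x : 'rV[R]_m) a z j :
  tor_map A (fun l => a *: u l - (x 0 l * a) *: z) j =
  a *: tor_map A u j - ((x *m A) 0 j * a) *: z.
Proof.
rewrite /tor_map; under eq_bigr do rewrite scalerBr !scalerA.
rewrite sumrB -scaler_suml scaler_sumr mxE mulr_suml; congr (_ - _ *: _).
- by apply: eq_bigr => l _; rewrite scalerA mulrC.
- by apply: eq_bigr => l _; ring.
Qed.

Lemma hom_map_shift m n (A : 'M[R]_(m, n)) (u : 'I_n -> X) (c : 'cV[R]_n) a z k :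
  hom_map A (fun j => a *: u j - (c j 0 * a) *: z) k =
  a *: hom_map A u k - ((A *m c) k 0 * a) *: z.
Proof.
rewrite /hom_map; under eq_bigr do rewrite scalerBr !scalerA.
rewrite sumrB -scaler_suml scaler_sumr mxE mulr_suml; congr (_ - _ *: _).
- by apply: eq_bigr => j _; rewrite scalerA mulrC.
- by apply: eq_bigr => j _; ring.
Qed.

Lemma sum_scale_tor_map m n (A : 'M[R]_(m, n)) (c : 'cV[R]_n) (u : 'I_m -> X) :
  \sum_(l < n) c l 0 *: tor_map A u l = \sum_(k < m) (A *m c) k 0 *: u k.
Proof.
under eq_bigr do rewrite /tor_map scaler_sumr.
rewrite exchange_big; apply: eq_bigr => k _.
by rewrite mxE scaler_suml; apply: eq_bigr => l _; rewrite scalerA mulrC.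
Qed.

Lemma sum_scale_hom_map m n (A : 'M[R]_(m, n)) (x : 'rV[R]_m) (u : 'I_n -> X) :
  \sum_(l < m) x 0 l *: hom_map A u l = \sum_(j < n) (x *m A) 0 j *: u j.
Proof.
under eq_bigr do rewrite /hom_map scaler_sumr.
rewrite exchange_big; apply: eq_bigr => j _.
by rewrite mxE scaler_suml; apply: eq_bigr => l _; rewrite scalerA.
Qed.

Lemma scale_split_pair n (x c : 'I_n -> R) (u : 'I_n -> X) a z :
  \sum_(l < n) x l * c l = 1 ->
  a *: z = \sum_(l < n) (c l * a) *: u l
            - \sum_(l < n) c l *: (a *: u l - (x l * a) *: z).
Proof.
move=> H1; under [X in _ - X]eq_bigr do rewrite scalerBr !scalerA.
rewrite sumrB opprB addrA addrAC subrr add0r -scaler_suml; congr (_ *: _).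
by rewrite -[LHS]mul1r -H1 mulr_suml; apply: eq_bigr => l _; ring.
Qed.

End ComplexMaps.

Section BurchVanishing.
Variables (R : comNzRingType) (m : R -> Prop) (X : lmodType R) (N : X -> Prop).
Variables (M : lmodType R) (F : free_res M).
Hypothesis Hloc : local_max_ideal m.
Hypothesis HN : submodule N.
Hypothesis HF : is_free_res F.
Local Notation mN := (ideal_mul m N).
Local Notation D := (fr_d F).

Lemma tor_cycle_row s (y : 'rV[R]_(fr_b F s.+1)) (z : X) :
  tor_cycle F s (fun j => (y *m D s) 0 j *: z).
Proof.
case: s y => [//|s] y j /=.
by rewrite tor_map_scale_row free_res_dd // mxE scale0r.
Qed.

Lemma tor_min_pair s a z : m a -> colon N m z -> min_pair m F s ->
  tor_zero F N s.+1 -> tor_zero F N s -> mN (a *: z).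
Proof.
move=> ma Hz [x [c [Hx Hc H1]]] T1 T0.
have [u [Nu Hu]] := T0 _ (fun j => Hz _ (Hx j)) (tor_cycle_row x z).
pose w l := a *: u l - (x 0 l * a) *: z.
have Nw : inN N w by move=> l; apply: (submodule_shift Hloc HN).
have Cw : tor_cycle F s.+1 w.
  by move=> j /=; rewrite tor_map_shift -Hu scalerA mulrC subrr.
have [u' [Nu' Hw]] := T1 w Nw Cw.
rewrite (@scale_split_pair _ _ _ (fun l => x 0 l) (fun l => c l 0) u); last first.
  by rewrite -H1 mxE.
apply: (ideal_mulB Hloc).
  by apply: ideal_mul_sum_mem => [l|]; [apply: (max_ideal_mull Hloc) | exact: Nu].
have -> : \sum_l c l 0 *: w l = \sum_l (D s.+1 *m c) l 0 *: u' l.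
  by rewrite -sum_scale_tor_map; apply: eq_bigr => l _; rewrite Hw.
exact: ideal_mul_sum_mem.
Qed.

Lemma ext_min_pair s a z : m a -> colon N m z -> min_pair m F s ->
  ext_zero F N s.+2 -> ext_zero F N s.+1 -> mN (a *: z).
Proof.
move=> ma Hz [x [c [Hx Hc H1]]] E2 E1.
have Cw : forall l, hom_map (D s.+2) (fun k => (D s.+1 *m c) k 0 *: z) l = 0.
  by move=> l; rewrite hom_map_scale_col mulmxA free_res_ddmx // mul0mx mxE scale0r.
have [u [Nu Hu]] := E2 _ (fun k => Hz _ (Hc k)) Cw.
pose y l := a *: u l - (c l 0 * a) *: z.
have Ny : inN N y by move=> l; apply: (submodule_shift Hloc HN).
have Cy : forall k, hom_map (D s.+1) y k = 0.
  by move=> k; rewrite hom_map_shift -Hu scalerA mulrC subrr.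
have [u' [Nu' Hy]] := E1 y Ny Cy.
rewrite (@scale_split_pair _ _ _ (fun l => c l 0) (fun l => x 0 l) u); last first.
  by rewrite -H1 mxE; apply: eq_bigr => l _; rewrite mulrC.
apply: (ideal_mulB Hloc).
  by apply: ideal_mul_sum_mem => [l|]; [apply: (max_ideal_mull Hloc) | exact: Nu].
have -> : \sum_l x 0 l *: y l = \sum_j (x *m D s) 0 j *: u' j.
  by rewrite -sum_scale_hom_map; apply: eq_bigr => l _; rewrite Hy.
exact: ideal_mul_sum_mem.
Qed.

End BurchVanishing.

Theorem proposition3p16 (R : comNzRingType) (m : R -> Prop)
  (X : lmodType R) (N : X -> Prop) (M : lmodType R) (t : nat)
  (F : free_res M) :
  noetherian R -> local_max_ideal m ->
  fin_gen X -> submodule N -> burch m N ->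
  (1 <= t)%N -> fin_gen M -> is_free_res F ->
  ((tor_zero F N t /\ tor_zero F N t.-1) \/
   (ext_zero F N t.+1 /\ ext_zero F N t)) ->
  pd_lt M t.
Proof.
move=> _ Hloc _ HN Hb Ht _ HF Hvan.
case: t Ht Hvan => // s _ Hvan.
have [a [z [ma Hz Nmz]]] := burch_witness HN Hb.
have [Hp|//] := min_pair_or_pd_lt Hloc HF (erefl (fr_b F s.+1)).
case: Nmz; case: Hvan => [[T1 T0]|[E2 E1]].
- exact: (tor_min_pair Hloc HN HF ma Hz Hp T1 T0).
- exact: (ext_min_pair Hloc HN HF ma Hz Hp E2 E1).
Qed.
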